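(* Let $q$ be a prime power, $m\ge1$, $g_1,\dots,g_n\in\mathbb{F}_{q^m}$ linearly independent over $\mathbb{F}_q$, $r_1,\dots,r_n\in\mathbb{F}_{q^m}$, and for $0\le i\le n$ let $\mathfrak M_i$ be the interpolation module for $(g_1,\dots,g_i)$ and $(r_1,\dots,r_i)$ (defined in the context). Let $1\le i\le n$ and let $P,K,N,D\in\mathcal{L}_q(x,q^m)$ be such that the rows $[P(x)\ \ -K(x)]$ and $[N(x)\ \ -D(x)]$ form a basis of $\mathfrak M_{i-1}$. Put $\Gamma_i:=P(g_i)-K(r_i)$ and $\Delta_i:=N(g_i)-D(r_i)$. If $\Gamma_i\neq0$, then the rows of $$\begin{bmatrix}x^q-\Gamma_i^{q-1}x&0\\\Delta_ix&-\Gamma_ix\end{bmatrix}\circ\begin{bmatrix}P(x)&-K(x)\\N(x)&-D(x)\end{bmatrix}$$ form a basis of $\mathfrak M_i$. If $\Delta_i\neq0$, then the rows of $$\begin{bmatrix}\Delta_ix&-\Gamma_ix\\0&x^q-\Delta_i^{q-1}x\end{bmatrix}\circ\begin{bmatrix}P(x)&-K(x)\\N(x)&-D(x)\end{bmatrix}$$ form a basis of $\mathfrak M_i$.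
   Context: Write $[i]:=q^i$. A $q$-linearized polynomial is $f(x)=\sum_{j=0}^{d}a_jx^{[j]}$, $a_j\in\mathbb{F}_{q^m}$; $\mathcal{L}_q(x,q^m)$ is the ring of these under addition and composition $\circ$. For $\mathbb{F}_q$-linearly independent $g_1,\dots,g_i$, $\Pi_i(x):=\prod_{u\in\langle g_1,\dots,g_i\rangle}(x-u)$ ($\mathbb{F}_q$-span), which lies in $\mathcal{L}_q(x,q^m)$, and $\Lambda_i(x):=\sum_{l=1}^i(-1)^{i-l}r_l\det(\mathfrak D_l)/\det(M_i(g_1,\dots,g_i))$, where $M_i(v_1,\dots,v_s)$ is the $i\times s$ matrix with $(j,l)$ entry $v_l^{[j-1]}$ and $\mathfrak D_l$ is $M_i(g_1,\dots,g_i,x)$ with the $l$-th column removed; $\Lambda_i\in\mathcal{L}_q(x,q^m)$ and $\Lambda_i(g_l)=r_l$ for $l\le i$. $\mathcal{L}_q(x,q^m)^2$ is a left module via $h\circ[f_1\ f_2]=[h\circ f_1\ \ h\circ f_2]$. The interpolation module $\mathfrak M_i$ is the set of all $\beta\circ[\Pi_i(x)\ \ 0]+\gamma\circ[-\Lambda_i(x)\ \ x]$ with $\beta,\gamma\in\mathcal{L}_q(x,q^m)$; for $i=0$ we use $\Pi_0(x)=x$, $\Lambda_0=0$, so $\mathfrak M_0=\mathcal{L}_q(x,q^m)^2$. A basis of a submodule is a generating set $\{f^{(1)},\dots,f^{(s)}\}$ such that $\sum a_l\circ f^{(l)}=0$ with $a_l\in\mathcal{L}_q(x,q^m)$ implies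 all $a_l=0$. Composition of a $2\times2$ matrix with a $2\times2$ matrix over $\mathcal{L}_q(x,q^m)$ is defined like matrix multiplication with products replaced by composition. *)

From HB Require Import structures.
From mathcomp Require Import all_boot all_order all_algebra all_field.
Set Implicit Arguments. Unset Strict Implicit. Unset Printing Implicit Defensive.
Import Order.TTheory GRing.Theory.
Local Open Scope ring_scope.

Section LinPoly.
Variable F : finFieldType.

Definition linearized (q : nat) (f : {poly F}) : Prop :=
  forall j : nat, f`_j != 0 -> exists k : nat, j = (q ^ k)%N.

Definition pair2 := ({poly F} * {poly F})%type.

Definition act (h : {poly F}) (v : pair2) : pair2 := (h \Po v.1, h \Po v.2).

Definition addp (u v : pair2) : pair2 := (u.1 + v.1, u.2 + v.2).

(* row [a b] o [[u];[v]]  (one row of a 2x2 matrix composition) *)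
Definition row_comp (a b : {poly F}) (u v : pair2) : pair2 :=
  addp (act a u) (act b v).

Definition Fq_span (q i : nat) (g : nat -> F) : {set F} :=
  [set u : F | [exists c : {ffun 'I_i -> F},
      [forall l, c l ^+ q == c l] && (u == \sum_(l < i) c l * g l)]].

Definition Pi (q i : nat) (g : nat -> F) : {poly F} :=
  \prod_(u in Fq_span q i g) ('X - u%:P).

(* Moore matrix M_i(g_1,...,g_i), (j,l) entry g_l^[j-1] (0-indexed here) *)
Definition Moore (q i : nat) (g : nat -> F) : 'M[F]_i :=
  \matrix_(j < i, c < i) (g c ^+ (q ^ j)).

(* D_l : M_i(g_1,...,g_i,x) with the (l+1)-th column removed (l 0-indexed) *)
Definition Dmx (q i : nat) (g : nat -> F) (l : nat) : 'M[{poly F}]_i :=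
  \matrix_(j < i, c < i)
    (if (c < l)%N then (g c ^+ (q ^ j))%:P
     else if (c.+1 < i)%N then (g c.+1 ^+ (q ^ j))%:P
     else 'X ^+ (q ^ j)).

Definition Lambda (q i : nat) (g r : nat -> F) : {poly F} :=
  (\det (Moore q i g))^-1 *:
    \sum_(l < i) ((-1) ^+ (i - l.+1) * r l) *: \det (Dmx q i g l).

Definition interp_module (q i : nat) (g r : nat -> F) (v : pair2) : Prop :=
  exists beta gamma : {poly F}, linearized q beta /\ linearized q gamma /\
    v = addp (act beta (Pi q i g, 0)) (act gamma (- Lambda q i g r, 'X)).

Definition is_basis2 (q : nat) (S : pair2 -> Prop) (u v : pair2) : Prop :=
  (forall w, S w <-> exists a b : {poly F}, linearized q a /\ linearized q b /\
                        w = addp (act a u) (act b v)) /\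
  (forall a b : {poly F}, linearized q a -> linearized q b ->
     addp (act a u) (act b v) = (0, 0) -> a = 0 /\ b = 0).

End LinPoly.

(* Write M_j for the interpolation module of (g_1..g_j, r_1..r_j).  M_j is the set of
   pairs [f1 f2] of q-linearized polynomials with f1(g_l) + f2(r_l) = 0 for l <= j:
   Pi_j is the monic linearized polynomial whose roots are exactly the q^j elements
   of the F_q-span of g_1..g_j (by the recursion
   Pi_(j+1) = (x^q - Pi_j(g_(j+1))^(q-1) x) o Pi_j),
   Lambda_j interpolates r at the g_l (Cramer's rule, the Moore matrix being invertible),
   and symbolic division by Pi_j gives the converse inclusion.
   Hence a combination a o [P -K] + b o [N -D] of the old basis lies in M_i iff
   a(Gamma) + b(Delta) = 0.  Both new rows satisfy this, and if Gamma <> 0 every solution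
   factors through them: a - b o (-(Delta/Gamma) x) vanishes at Gamma, so it is a symbolic
   multiple of x^q - Gamma^(q-1) x, whose roots are F_q Gamma.  Independence is inherited
   from the old basis since composing with x^q - Gamma^(q-1) x or Gamma x is injective.
   The case Delta <> 0 is the case Gamma <> 0 for the swapped basis. *)

From HB Require Import structures.
From mathcomp Require Import all_boot all_order all_algebra all_field perm zify.
Set Implicit Arguments.
Unset Strict Implicit.
Unset Printing Implicit Defensive.
Import GRing.Theory.
Local Open Scope ring_scope.

Section Linearized.
Variables (F : finFieldType) (q : nat).
Hypotheses (q_pchar : [pchar F].-nat q) (q_gt1 : (1 < q)%N).

Local Notation lin := (@linearized F q).

Lemma expn_q_gt0 k : (0 < q ^ k)%N.
Proof. by rewrite expn_gt0 ltnW. Qed.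

Lemma expn_q_pchar k : [pchar F].-nat (q ^ k)%N.
Proof. by rewrite pnatX q_pchar. Qed.

Lemma expn_q_pchar_poly k : [pchar {poly F}].-nat (q ^ k)%N.
Proof. by rewrite (eq_pnat _ (@pchar_poly F)) expn_q_pchar. Qed.

Lemma Fq_expn_q (c : F) k : c ^+ q = c -> c ^+ (q ^ k)%N = c.
Proof. by move=> cq; elim: k => [|k IHk]; rewrite ?expr1 // expnSr exprM IHk cq. Qed.

Lemma lin_coefP f : lin f -> forall j, f`_j = 0 \/ exists k, j = (q ^ k)%N.
Proof. by move=> Hf j; have [/Hf|/negPn/eqP] := boolP (f`_j != 0); [right | left]. Qed.

Lemma lin_coef0 f : lin f -> f`_0 = 0.
Proof.
by move=> Hf; case: (lin_coefP Hf 0) => // -[k k0]; have := expn_q_gt0 k; rewrite -k0.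
Qed.

Lemma lin0 : lin 0.
Proof. by move=> j; rewrite coef0 eqxx. Qed.

Lemma linD f h : lin f -> lin h -> lin (f + h).
Proof.
move=> Hf Hh j; rewrite coefD.
by case: (lin_coefP Hf j) => [->|//]; rewrite add0r => /Hh.
Qed.

Lemma linN f : lin f -> lin (- f).
Proof. by move=> Hf j; rewrite coefN oppr_eq0 => /Hf. Qed.

Lemma lin_sign k f : lin f -> lin ((-1) ^+ k * f).
Proof. by move=> Hf; rewrite -signr_odd mulr_sign; case: ifP => _ //; exact: linN. Qed.

Lemma linB f h : lin f -> lin h -> lin (f - h).
Proof. by move=> Hf Hh; apply/linD/linN. Qed.

Lemma linZ c f : lin f -> lin (c *: f).
Proof. by move=> Hf j; rewrite coefZ mulf_eq0 negb_or => /andP[_ /Hf]. Qed.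

Lemma lin_sum I (s : seq I) (P : pred I) (f : I -> {poly F}) :
  (forall i, P i -> lin (f i)) -> lin (\sum_(i <- s | P i) f i).
Proof. by move=> Hf; elim/big_rec: _ => [|i h /Hf]; [exact: lin0 | exact: linD]. Qed.

Lemma linXn k : lin 'X^(q ^ k).
Proof.
by move=> j; rewrite coefXn; have [->|_] := eqVneq j (q ^ k)%N; [exists k | rewrite eqxx].
Qed.

Lemma linX : lin 'X.
Proof. by rewrite -[X in lin X]expr1 -(expn0 q); exact: linXn. Qed.

Lemma linZX c : lin (c *: 'X).
Proof. exact/linZ/linX. Qed.

Lemma expr_sum_q I (s : seq I) (P : pred I) (f : I -> {poly F}) k :
  (\sum_(i <- s | P i) f i) ^+ (q ^ k)%N = \sum_(i <- s | P i) f i ^+ (q ^ k)%N.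
Proof.
elim/big_rec2: _ => [|i a b _ <-]; last by rewrite exprDn_pchar ?expn_q_pchar_poly.
by rewrite expr0n gtn_eqF ?expn_q_gt0.
Qed.

Lemma lin_exp f k : lin f -> lin (f ^+ (q ^ k)%N).
Proof.
move=> Hf; rewrite -[f]coefK poly_def expr_sum_q; apply: lin_sum => j _.
rewrite exprZn -exprM; case: (lin_coefP Hf j) => [->|[l ->]].
  by rewrite expr0n gtn_eqF ?expn_q_gt0 // scale0r; exact: lin0.
by rewrite -expnD; apply/linZ/linXn.
Qed.

Lemma lin_comp f h : lin f -> lin h -> lin (f \Po h).
Proof.
move=> Hf Hh; rewrite comp_polyE; apply: lin_sum => j _.
case: (lin_coefP Hf j) => [->|[k ->]]; first by rewrite scale0r; exact: lin0.
exact/linZ/lin_exp.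
Qed.

Lemma horner_linD f x y : lin f -> f.[x + y] = f.[x] + f.[y].
Proof.
move=> Hf; rewrite !horner_coef -big_split; apply: eq_bigr => j _ /=.
case: (lin_coefP Hf j) => [->|[k ->]]; first by rewrite !mul0r addr0.
by rewrite exprDn_pchar ?expn_q_pchar // mulrDr.
Qed.

Lemma horner_lin0 f : lin f -> f.[0] = 0.
Proof. by move=> Hf; rewrite horner_coef0 lin_coef0. Qed.

Lemma horner_linN f x : lin f -> f.[- x] = - f.[x].
Proof.
by move=> Hf; apply/eqP; rewrite -addr_eq0 -horner_linD // addNr horner_lin0.
Qed.

Lemma horner_linZ f c x : lin f -> c ^+ q = c -> f.[c * x] = c * f.[x].
Proof.
move=> Hf cq; rewrite !horner_coef mulr_sumr; apply: eq_bigr => j _.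
case: (lin_coefP Hf j) => [->|[k ->]]; first by rewrite !mul0r mulr0.
by rewrite exprMn Fq_expn_q // mulrCA.
Qed.

Lemma horner_lin_sum f I (s : seq I) (P : pred I) (x : I -> F) :
  lin f -> f.[\sum_(i <- s | P i) x i] = \sum_(i <- s | P i) f.[x i].
Proof.
by move=> Hf; elim/big_rec2: _ => [|i a b _ <-]; [exact: horner_lin0 | exact: horner_linD].
Qed.

Lemma comp_linD f x y : lin f -> f \Po (x + y) = (f \Po x) + (f \Po y).
Proof.
move=> Hf; rewrite !comp_polyE -big_split; apply: eq_bigr => j _ /=.
case: (lin_coefP Hf j) => [->|[k ->]]; first by rewrite !scale0r addr0.
by rewrite exprDn_pchar ?expn_q_pchar_poly // scalerDr.
Qed.

Lemma comp_lin0 f : lin f -> f \Po 0 = 0.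
Proof. by move=> Hf; rewrite comp_poly0r lin_coef0. Qed.

Lemma comp_linN f x : lin f -> f \Po (- x) = - (f \Po x).
Proof.
by move=> Hf; apply/eqP; rewrite -addr_eq0 -comp_linD // addNr comp_lin0.
Qed.

Lemma comp_polyZX (c : F) p : (c *: 'X) \Po p = c *: p.
Proof. by rewrite comp_polyZ comp_polyX. Qed.

Lemma comp_polyNZX (c : F) p : (- (c *: 'X)) \Po p = (- c) *: p.
Proof. by rewrite -scaleNr comp_polyZX. Qed.

Lemma comp_polyNX (p : {poly F}) : (- 'X) \Po p = - p.
Proof. by rewrite -[- 'X]scaleN1r comp_polyZX scaleN1r. Qed.

Lemma lin_divp_step T s h : lin T -> T \is monic -> size T = (q ^ s).+1 -> lin h ->
  (q ^ s < size h)%N -> exists2 b, lin b & (size (h - (b \Po T))%R < size h)%N.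
Proof.
move=> HT Tm sT Hh big; have h_gt0 : (0 < size h)%N by apply: leq_ltn_trans big.
have [t ht] : exists t, (size h).-1 = (q ^ t)%N.
  by apply: Hh; rewrite -lead_coefE lead_coef_eq0 -size_poly_gt0.
have le_st : (s <= t)%N by rewrite -(leq_exp2l _ _ q_gt1) -ht -ltnS prednK.
exists (lead_coef h *: 'X^(q ^ (t - s))); first exact/linZ/linXn.
have Tk_monic : T ^+ (q ^ (t - s)) \is monic by exact: monic_exp.
have sTk : size (T ^+ (q ^ (t - s))) = size h.
  rewrite -(prednK h_gt0) ht -[LHS]prednK ?size_poly_gt0 ?monic_neq0 //.
  by rewrite size_exp sT /= -expnD subnKC.
rewrite comp_polyZ comp_Xn_poly; apply: leq_ltn_trans (_ : _ <= (size h).-1)%N _.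
  apply/leq_sizeP => j; rewrite coefB coefZ leq_eqVlt => /orP[/eqP <-|hj].
    by rewrite -lead_coefE -sTk -lead_coefE (monicP Tk_monic) mulr1 subrr.
  by rewrite !nth_default ?mulr0 ?subr0 ?sTk // -(prednK h_gt0).
by rewrite prednK.
Qed.

Lemma lin_divp T s h : lin T -> T \is monic -> size T = (q ^ s).+1 -> lin h ->
  exists b rho, [/\ lin b, lin rho, h = (b \Po T) + rho & (size rho <= q ^ s)%N].
Proof.
move=> HT Tm sT; elim: (size h).+1 {-2}h (ltnSn (size h)) => // k IHk {}h h_lt Hh.
have [small|big] := leqP (size h) (q ^ s).
  by exists 0, h; rewrite comp_poly0 add0r; split=> //; exact: lin0.
have [b0 Hb0 lt_h] := lin_divp_step HT Tm sT Hh big.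
have [b [rho [Hb Hrho eh srho]]] := IHk _ (leq_trans lt_h h_lt) (linB Hh (lin_comp Hb0 HT)).
exists (b + b0), rho; split=> //; first exact: linD.
by rewrite comp_polyD -addrA (addrC (b0 \Po T)) addrA -eh subrK.
Qed.

Lemma lin_size_le_q f : lin f -> (size f <= q)%N -> f = f`_1 *: 'X.
Proof.
move=> Hf sf; apply/polyP => j; rewrite coefZ coefX.
have [->|ne1] := eqVneq j 1%N; first by rewrite mulr1.
rewrite mulr0; case: (lin_coefP Hf j) => // -[k jk].
have [lt_jq|] := ltnP j q; last by move/(leq_trans sf)/leq_sizeP->.
have k0 : k = 0%N by apply/eqP; rewrite -leqn0 -ltnS -(ltn_exp2l _ _ q_gt1) expn1 -jk.
by move: ne1; rewrite jk k0 expn0 eqxx.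
Qed.

(* The paper's x^q - e^(q-1) x; its roots are the F_q-multiples of e. *)
Definition Fq_ann (e : F) : {poly F} := 'X^q - (e ^+ (q - 1)) *: 'X.

Lemma lin_Fq_ann e : lin (Fq_ann e).
Proof. by apply: linB; [rewrite -{2}(expn1 q); exact: linXn | exact: linZX]. Qed.

Lemma size_Fq_ann e : size (Fq_ann e) = q.+1.
Proof.
rewrite size_polyDl size_polyXn // size_polyN.
by rewrite (leq_ltn_trans (size_scale_leq _ _)) // size_polyX ltnS.
Qed.

Lemma Fq_ann_monic e : Fq_ann e \is monic.
Proof.
rewrite monicE lead_coefDl ?lead_coefXn // size_polyXn size_polyN.
by rewrite (leq_ltn_trans (size_scale_leq _ _)) // size_polyX ltnS.
Qed.

Lemma Fq_ann_root e c : c ^+ q = c -> root (Fq_ann e) (c * e).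
Proof.
move=> cq; apply/rootP; rewrite hornerD hornerN hornerZ hornerXn hornerX exprMn cq.
by rewrite mulrCA -exprSr subn1 prednK ?subrr // ltnW.
Qed.

Lemma root_Fq_ann e : root (Fq_ann e) e.
Proof. by rewrite -[X in root _ X]mul1r Fq_ann_root ?expr1n. Qed.

Lemma Fq_ann_dvd e h : e != 0 -> lin h -> h.[e] = 0 ->
  exists2 a, lin a & h = a \Po Fq_ann e.
Proof.
move=> e_neq0 Hh he; have sT : size (Fq_ann e) = (q ^ 1).+1 by rewrite expn1 size_Fq_ann.
have [a [rho [Ha Hrho eh srho]]] := lin_divp (@lin_Fq_ann e) (Fq_ann_monic e) sT Hh.
exists a => //; rewrite expn1 in srho; have rhoE := lin_size_le_q Hrho srho.
move: he; rewrite eh hornerD horner_comp (rootP (root_Fq_ann e)) horner_lin0 // add0r.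
rewrite rhoE hornerZ hornerX => /eqP; rewrite mulf_eq0 (negPf e_neq0) orbF => /eqP rho1.
by rewrite rho1 scale0r addr0.
Qed.

Lemma det_polyC_entries k (A : 'M[{poly F}]_k) :
  (forall a b, A a b = ((A a b)`_0)%:P) ->
  \det A = (\det (map_mx (fun p : {poly F} => p`_0) A))%:P.
Proof.
move=> AC; rewrite -det_map_mx; congr (\det _); apply/matrixP => a b.
by rewrite [RHS]mxE mxE /= -AC.
Qed.

Lemma lin_det_Dmx g j l : (l < j)%N -> lin (\det (Dmx q j g l)).
Proof.
case: j => [//|j] lj; rewrite (expand_det_col _ ord_max); apply: lin_sum => t _.
have -> : Dmx q j.+1 g l t ord_max = 'X^(q ^ t) by rewrite mxE /= ltnn ltnNge -ltnS lj.
rewrite /cofactor det_polyC_entries => [|a b]; last first.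
  by rewrite !mxE lift_max; case: ifP => _; rewrite ?ltnS ?ltn_ord coefC.
by rewrite mulrCA; apply: lin_sign; rewrite mulrC mul_polyC; exact/linZ/linXn.
Qed.

Lemma lin_Lambda j g r : lin (Lambda q j g r).
Proof. by apply/linZ/lin_sum => l _; exact/linZ/lin_det_Dmx. Qed.

(* For the rows [P -K] and [N -D] at index i-1 these are the paper's Gamma and Delta. *)
Definition defect (g r : nat -> F) j (w : pair2 F) : F := w.1.[g j] + w.2.[r j].

Definition interp_ker (g r : nat -> F) j (w : pair2 F) : Prop :=
  [/\ lin w.1, lin w.2 & forall l, (l < j)%N -> defect g r l w = 0].

Section FqSpan.
Variable m : nat.
Hypothesis cardF : #|F| = (q ^ m)%N.
Variables (g : nat -> F) (n : nat).
Hypothesis g_free : forall c : nat -> F, (forall l, (l < n)%N -> c l ^+ q = c l) ->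
  \sum_(l < n) c l * g l = 0 -> forall l, (l < n)%N -> c l = 0.

Local Notation V j := (Fq_span q j g).
Local Notation PI j := (Pi q j g).

Lemma Fq_spanP j u : reflect (exists2 c : nat -> F,
  forall l, (l < j)%N -> c l ^+ q = c l & u = \sum_(l < j) c l * g l) (u \in V j).
Proof.
rewrite inE; apply: (iffP existsP) => [[c /andP[/forallP cq /eqP ->]] | [c cq ->]].
  exists (fun l => if insub l is Some o then c o else 0) => [l lj|].
    by rewrite insubT; apply/eqP.
  by apply: eq_bigr => l _; rewrite valK.
exists [ffun l : 'I_j => c l]; apply/andP; split.
  by apply/forallP => l; rewrite ffunE cq.
by apply/eqP/eq_bigr => l _; rewrite ffunE.
Qed.

Lemma Fq_free_leq j c : (j <= n)%N -> (forall l, (l < j)%N -> c l ^+ q = c l) ->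
  \sum_(l < j) c l * g l = 0 -> forall l, (l < j)%N -> c l = 0.
Proof.
move=> jn cq c0; pose d l := if (l < j)%N then c l else 0.
have dq l : (l < n)%N -> d l ^+ q = d l.
  by rewrite /d; case: ifP => [lj _|_ _]; [exact: cq | rewrite expr0n gtn_eqF // ltnW].
have d0 : \sum_(l < n) d l * g l = 0.
  rewrite -[RHS]c0 (big_ord_widen n (fun l => c l * g l) jn) [RHS]big_mkcond /=.
  by apply: eq_bigr => l _; rewrite /d; case: ifP; rewrite ?mul0r.
by move=> l lj; have := g_free dq d0 (leq_trans lj jn); rewrite /d lj.
Qed.

Lemma card_Fq : #|[set c : F | c ^+ q == c]| = q.
Proof.
have sXq : size ('X^q - 'X : {poly F}) = q.+1.
  by rewrite size_polyDl size_polyXn // size_polyN size_polyX ltnS.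
have Xq_dvd : ('X^q - 'X) %| ('X^#|F| - 'X : {poly F}).
  have -> : ('X^#|F| - 'X : {poly F}) = \sum_(0 <= k < m) ('X^q - 'X) ^+ (q ^ k).
    rewrite cardF (telescope_sumr_eq (fun k => 'X^(q ^ k))) ?expn0 ?expr1 // => k _.
    by rewrite exprDn_pchar ?exprNn_pchar ?expn_q_pchar_poly // -exprM expnS.
  elim/big_ind: _ => [|x y|k _]; [exact: dvdp0 | exact: dvdp_add |].
  by apply: dvdp_exp; [exact: expn_q_gt0 | exact: dvdpp].
rewrite finField_genPoly in Xq_dvd; have [msk Xq_eqp] := dvdp_prod_XsubC Xq_dvd.
set s := mask msk _ in Xq_eqp.
have s_uniq : uniq s by apply/mask_uniq/index_enum_uniq.
have s_size : size s = q by have := eqp_size Xq_eqp; rewrite sXq size_prod_XsubC => -[].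
transitivity #|s|; last by rewrite (card_uniqP s_uniq).
apply: eq_card => c.
by rewrite inE -(root_prod_XsubC s c) -(eqp_root Xq_eqp) rootE !hornerE subr_eq0.
Qed.

Lemma card_Fq_span j : (j <= n)%N -> #|V j| = (q ^ j)%N.
Proof.
move=> jn; pose C := [set c : {ffun 'I_j -> F} | [forall l, c l ^+ q == c l]].
have -> : V j = [set \sum_(l < j) c l * g l | c : {ffun 'I_j -> F} in C].
  apply/setP => u; rewrite inE; apply/existsP/imsetP => [[c /andP[cq /eqP ->]]|[c]].
    by exists c; rewrite ?inE.
  by rewrite inE => cq ->; exists c; rewrite cq eqxx.
rewrite card_in_imset => [|c1 c2].
  rewrite -card_Fq -[j in (_ ^ j)%N]card_ord -card_ffun_on; apply: eq_card => c.
  by rewrite inE; apply/forallP/ffun_onP => cq l; move: (cq l); rewrite inE.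
rewrite !inE => /forallP c1q /forallP c2q e12; apply/ffunP => l.
pose d l := if insub l is Some o then c1 o - c2 o else 0.
have dq l' : (l' < j)%N -> d l' ^+ q = d l'.
  move=> lj; rewrite /d insubT /= exprDn_pchar ?exprNn_pchar //.
  by rewrite (eqP (c1q _)) (eqP (c2q _)).
have d0 : \sum_(l < j) d l * g l = 0.
  rewrite (eq_bigr (fun o : 'I_j => c1 o * g o - c2 o * g o)) => [|o _].
    by rewrite sumrB e12 subrr.
  by rewrite /d valK mulrBl.
apply/eqP; rewrite -subr_eq0; apply/eqP.
by have := Fq_free_leq jn dq d0 (ltn_ord l); rewrite /d valK.
Qed.

Lemma mem_g_Fq_span j l : (l < j)%N -> g l \in V j.
Proof.
move=> lj; apply/Fq_spanP; exists (fun l' => (l' == l)%:R) => [l' _|].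
  by case: (l' == l); rewrite ?expr1n // expr0n gtn_eqF // ltnW.
rewrite (bigD1 (Ordinal lj)) //= eqxx mul1r big1 ?addr0 // => l' ne.
rewrite (_ : (val l' == l) = false) ?mul0r //; apply/negbTE.
by apply: contra ne => /eqP e; apply/eqP/val_inj.
Qed.

Lemma Fq_spanS j v : v \in V j.+1 ->
  exists2 w, w \in V j & exists2 c, c ^+ q = c & v = w + c * g j.
Proof.
case/Fq_spanP => c cq ->; exists (\sum_(l < j) c l * g l).
  by apply/Fq_spanP; exists c => // l lj; apply/cq/ltnW.
by exists (c j); [exact: cq | rewrite big_ord_recr].
Qed.

Lemma Fq_span0 : V 0 = [set 0].
Proof.
apply/setP => u; rewrite in_set1.
by apply/Fq_spanP/eqP => [[c _ ->]|->]; [|exists (fun=> 0)]; rewrite ?big_ord0.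
Qed.

Lemma lin_Fq_span_root j f : lin f -> (forall l, (l < j)%N -> f.[g l] = 0) ->
  forall u, u \in V j -> root f u.
Proof.
move=> Hf fg u /Fq_spanP[c cq ->]; apply/rootP.
by rewrite horner_lin_sum //; apply: big1 => l _; rewrite horner_linZ ?fg ?mulr0 ?cq.
Qed.

Lemma Pi_monic j : PI j \is monic.
Proof. exact: monic_prod_XsubC. Qed.

Lemma root_Pi j x : root (PI j) x = (x \in V j).
Proof. by rewrite /Pi -big_enum root_prod_XsubC mem_enum. Qed.

Lemma size_Pi j : (j <= n)%N -> size (PI j) = (q ^ j).+1.
Proof. by move=> jn; rewrite /Pi -big_enum size_prod_XsubC -cardE card_Fq_span. Qed.

Lemma Pi_dvdp j (f : {poly F}) : (forall u, u \in V j -> root f u) -> PI j %| f.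
Proof.
move=> fV; rewrite /Pi -big_enum; apply: uniq_roots_dvdp.
  by apply/allP => u; rewrite mem_enum; exact: fV.
by rewrite uniq_rootsE enum_uniq.
Qed.

Lemma Fq_span_roots_eq0 j (f : {poly F}) : (j <= n)%N -> (size f <= q ^ j)%N ->
  (forall u, u \in V j -> root f u) -> f = 0.
Proof.
move=> jn sf /Pi_dvdp Pi_f; apply/eqP; apply: contraTT sf => f_neq0.
by rewrite -ltnNge -(size_Pi jn) dvdp_leq.
Qed.

Lemma Pi0 : PI 0 = 'X.
Proof. by rewrite /Pi Fq_span0 big_set1 subr0. Qed.

Lemma Pi_S j : (j < n)%N -> lin (PI j) -> PI j.+1 = Fq_ann (PI j).[g j] \Po PI j.
Proof.
move=> jn HPi; set R := _ \Po _.
have sPi_gt1 : (1 < size (PI j))%N by rewrite (size_Pi (ltnW jn)) ltnS expn_q_gt0.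
have R_monic : R \is monic.
  rewrite monicE lead_coef_comp // (monicP (Fq_ann_monic _)) (monicP (Pi_monic j)).
  by rewrite expr1n mul1r.
have R_roots u : u \in V j.+1 -> root R u.
  case/Fq_spanS => w wV [c cq ->]; have /rootP Pi_w : root (PI j) w by rewrite root_Pi.
  apply/rootP; rewrite horner_comp horner_linD // Pi_w add0r horner_linZ //.
  exact/rootP/Fq_ann_root.
have sR : size R = (q ^ j.+1).+1.
  rewrite -[LHS]prednK ?size_poly_gt0 ?monic_neq0 // size_comp_poly size_Fq_ann.
  by rewrite (size_Pi (ltnW jn)) expnS.
apply/eqP; rewrite -(eqp_monic (Pi_monic _) R_monic) -(dvdp_size_eqp (Pi_dvdp R_roots)).
by rewrite size_Pi // sR.
Qed.

Lemma lin_Pi j : (j <= n)%N -> lin (PI j).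
Proof.
elim: j => [_|j IHj jn]; first by rewrite Pi0; exact: linX.
have HPi := IHj (ltnW jn).
by rewrite Pi_S //; apply: lin_comp => //; exact: lin_Fq_ann.
Qed.

Lemma Moore_det_neq0 j : (j <= n)%N -> \det (Moore q j g) != 0.
Proof.
move=> jn; apply/negP => /det0P[v v_neq0 v_ker].
pose L := \sum_(t < j) v 0 t *: 'X^(q ^ t).
have HL : lin L by apply: lin_sum => t _; exact/linZ/linXn.
have Lg l : (l < j)%N -> L.[g l] = 0.
  move=> lj; have := congr1 (fun w : 'rV[F]_j => w 0 (Ordinal lj)) v_ker.
  rewrite !mxE => <-; rewrite horner_sum; apply: eq_bigr => t _.
  by rewrite hornerZ hornerXn mxE.
have sL : (size L <= q ^ j)%N.
  rewrite /L; elim/big_ind: _ => [|x y sx sy|t _]; first by rewrite size_poly0.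
    by rewrite (leq_trans (size_polyD _ _)) // geq_max sx sy.
  by rewrite (leq_trans (size_scale_leq _ _)) // size_polyXn ltn_exp2l.
have L0 := Fq_span_roots_eq0 jn sL (lin_Fq_span_root HL Lg).
move/negP: v_neq0; apply; apply/eqP/rowP => t; rewrite mxE.
have := congr1 (fun p : {poly F} => p`_(q ^ t)) L0.
by rewrite coef0 /L coef_sumMXn (big_pred1 t) // => s /=; rewrite eqn_exp2l.
Qed.

(* Moore_rot j l is the Moore matrix with column l moved to the end, i.e. D_l at g_l. *)
Definition rot_col j l c := if (c < l)%N then c else if (c.+1 < j)%N then c.+1 else l.

Definition Moore_rot j l : 'M[F]_j := \matrix_(t < j, c < j) g (rot_col j l c) ^+ (q ^ t).

Lemma Moore_rot_last j : (0 < j)%N -> Moore_rot j j.-1 = Moore q j g.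
Proof.
move=> j_gt0; apply/matrixP => t c; rewrite !mxE /rot_col.
have := ltn_ord c; case: ifP => // h1; case: ifP => h2 c_lt; first lia.
by congr (g _ ^+ _); lia.
Qed.

Lemma rot_col_swap j l c : (l.+1 < j)%N -> (c < j)%N ->
  rot_col j l c = rot_col j l.+1 (if c == l then j.-1 else if c == j.-1 then l else c).
Proof.
move=> lj cj; rewrite /rot_col; case: (eqVneq c l) => [->|ne_cl].
  by rewrite ltnn lj; case: ifP => ?; [lia|]; case: ifP => ?; lia.
case: (eqVneq c j.-1) => [->|ne_cj].
  by rewrite ltnSn; case: ifP => ?; [lia|]; case: ifP => ?; lia.
by case: ifP => ?; case: ifP => ? //; try lia; case: ifP => ?; lia.
Qed.

Lemma Moore_rot_swap j l (lj : (l < j)%N) (j1j : (j.-1 < j)%N) : (l.+1 < j)%N ->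
  Moore_rot j l = xcol (Ordinal lj) (Ordinal j1j) (Moore_rot j l.+1).
Proof.
move=> l1j; apply/matrixP => t c; rewrite !mxE (rot_col_swap l1j (ltn_ord c)).
congr (g (rot_col _ _ _) ^+ _); case: tpermP => [->|->|ne1 ne2] /=.
- by rewrite eqxx.
- by rewrite eqxx; case: ifP => //; lia.
rewrite ifF; last by apply/negP => /eqP e; apply: ne1; apply: val_inj.
by rewrite ifF //; apply/negP => /eqP e; apply: ne2; apply: val_inj.
Qed.

Lemma det_Moore_rot j l : (l < j)%N ->
  \det (Moore_rot j l) = (-1) ^+ (j.-1 - l) * \det (Moore q j g).
Proof.
move=> lj; move e: (j.-1 - l)%N => k; elim: k l lj e => [|k IHk] l lj e.
  have -> : l = j.-1 by lia.
  by rewrite Moore_rot_last ?mul1r //; lia.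
have l1j : (l.+1 < j)%N by lia.
have j1j : (j.-1 < j)%N by lia.
rewrite (Moore_rot_swap lj j1j l1j) xcolE det_mulmx det_perm odd_tperm.
rewrite (IHk l.+1) //; last by lia.
have -> : (Ordinal lj != Ordinal j1j) = true by apply/negP => /eqP/(congr1 val) /=; lia.
by rewrite expr1 mulrN1 exprS mulN1r mulNr.
Qed.

Lemma horner_det_Dmx j l x : (\det (Dmx q j g l)).[x] =
  \det (\matrix_(t < j, c < j) (if (c < l)%N then g c ^+ (q ^ t)
    else if (c.+1 < j)%N then g c.+1 ^+ (q ^ t) else x ^+ (q ^ t))).
Proof.
rewrite -horner_evalE -det_map_mx; congr (\det _); apply/matrixP => t c.
rewrite !mxE /= horner_evalE.
by case: ifP => _; [rewrite hornerC | case: ifP => _; rewrite ?hornerC ?hornerXn].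
Qed.

Lemma horner_det_Dmx_eq j l : (l < j)%N ->
  (\det (Dmx q j g l)).[g l] = (-1) ^+ (j.-1 - l) * \det (Moore q j g).
Proof.
move=> lj; rewrite horner_det_Dmx -det_Moore_rot //; congr (\det _).
by apply/matrixP => t c; rewrite !mxE /rot_col; case: ifP => _ //; case: ifP.
Qed.

Lemma horner_det_Dmx_neq j l l' : (l < j)%N -> (l' < j)%N -> l != l' ->
  (\det (Dmx q j g l')).[g l] = 0.
Proof.
move=> lj l'j ne; rewrite horner_det_Dmx -det_tr.
(* g_l occurs both in its own column and in the last one. *)
have j1j : (j.-1 < j)%N by lia.
case: (ltngtP l l') => [lt_ll'|lt_l'l|e]; last by rewrite e eqxx in ne.
  apply: (determinant_alternate (i1 := Ordinal lj) (i2 := Ordinal j1j)).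
    by apply/negP => /eqP/(congr1 val) /=; lia.
  by move=> t; rewrite !mxE /= lt_ll' ifF ?ifF //; lia.
have l1j : (l.-1 < j)%N by lia.
apply: (determinant_alternate (i1 := Ordinal l1j) (i2 := Ordinal j1j)).
  by apply/negP => /eqP/(congr1 val) /=; lia.
move=> t; rewrite !mxE /= ifF; last lia.
by rewrite ifT ?ifF ?ifF ?prednK //; lia.
Qed.

Lemma horner_Lambda j r l : (j <= n)%N -> (l < j)%N -> (Lambda q j g r).[g l] = r l.
Proof.
move=> jn lj; rewrite /Lambda hornerZ horner_sum (bigD1 (Ordinal lj)) //= big1 ?addr0.
  rewrite hornerZ horner_det_Dmx_eq // (_ : j - l.+1 = j.-1 - l)%N; last by lia.
  rewrite mulrACA -exprD addnn -signr_odd odd_double expr0 mul1r.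
  by rewrite mulrCA mulVf ?mulr1 // Moore_det_neq0.
move=> l' ne; rewrite hornerZ horner_det_Dmx_neq ?mulr0 //.
by apply: contra ne => /eqP e; apply/eqP/val_inj; rewrite /= e.
Qed.

Lemma interp_module_ker r j w : (j <= n)%N -> interp_module q j g r w -> interp_ker g r j w.
Proof.
move=> jn [b [c [Hb [Hc ->]]]]; have HPi := lin_Pi jn.
have HL : lin (Lambda q j g r) by apply: lin_Lambda.
rewrite /addp /act /= comp_lin0 // add0r comp_polyXr; split=> //.
  by apply: linD; apply: lin_comp => //; exact: linN.
move=> l lj; rewrite /defect /= hornerD !horner_comp hornerN horner_Lambda //.
have /rootP -> : root (PI j) (g l) by rewrite root_Pi mem_g_Fq_span.
by rewrite horner_lin0 // add0r horner_linN // addNr.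
Qed.

Lemma interp_ker_module r j w : (j <= n)%N -> interp_ker g r j w -> interp_module q j g r w.
Proof.
move=> jn [H1 H2 w0]; have HPi := lin_Pi jn.
pose h := w.1 + (w.2 \Po Lambda q j g r).
have Hh : lin h by apply: linD => //; apply: lin_comp => //; exact: lin_Lambda.
have hg l : (l < j)%N -> h.[g l] = 0.
  by move=> lj; rewrite hornerD horner_comp horner_Lambda //; exact: w0.
have [b [rho [Hb Hrho eh srho]]] := lin_divp HPi (Pi_monic j) (size_Pi jn) Hh.
have rho0 : rho = 0.
  apply: (Fq_span_roots_eq0 jn srho) => u uV; apply/rootP.
  have /rootP := lin_Fq_span_root Hh hg uV; rewrite eh hornerD horner_comp.
  have /rootP -> : root (PI j) u by rewrite root_Pi.
  by rewrite horner_lin0 // add0r.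
exists b, w.2; do 2!split=> //; rewrite /addp /act /= comp_lin0 // add0r comp_polyXr.
apply: injective_projections => //=; rewrite comp_linN //.
by move: eh; rewrite rho0 addr0 /h => <-; rewrite addrK.
Qed.

End FqSpan.

Lemma defect_comb g r l a b u v : lin a -> lin b ->
  defect g r l (addp (act a u) (act b v)) = a.[defect g r l u] + b.[defect g r l v].
Proof.
move=> Ha Hb; rewrite /defect /= !hornerD !horner_comp.
by rewrite horner_linD // [b.[_ + _]]horner_linD // addrACA.
Qed.

Lemma interp_ker_comb g r j a b u v : lin a -> lin b ->
  interp_ker g r j u -> interp_ker g r j v -> interp_ker g r j (addp (act a u) (act b v)).
Proof.
move=> Ha Hb [Hu1 Hu2 u0] [Hv1 Hv2 v0]; split=> /=; try by apply: linD; apply: lin_comp.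
by move=> l lj; rewrite defect_comb // u0 // v0 // !horner_lin0 // addr0.
Qed.

Lemma interp_kerS g r j a b u v : lin a -> lin b ->
  interp_ker g r j u -> interp_ker g r j v ->
  a.[defect g r j u] + b.[defect g r j v] = 0 ->
  interp_ker g r j.+1 (addp (act a u) (act b v)).
Proof.
move=> Ha Hb ker_u ker_v abj; have [H1 H2 w0] := interp_ker_comb Ha Hb ker_u ker_v.
split=> // l; rewrite ltnS leq_eqVlt => /orP[/eqP ->|]; last exact: w0.
by rewrite defect_comb.
Qed.

Lemma interp_kerW g r j w : interp_ker g r j.+1 w -> interp_ker g r j w.
Proof. by case=> H1 H2 w0; split=> // l lj; apply/w0/ltnW. Qed.

Lemma act_row_comp a b A B C D u v : lin a -> lin b ->
  addp (act a (row_comp A B u v)) (act b (row_comp C D u v)) =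
  row_comp ((a \Po A) + (b \Po C)) ((a \Po B) + (b \Po D)) u v.
Proof.
move=> Ha Hb; rewrite /row_comp /addp /act /=.
by congr (_, _); rewrite !comp_linD // !comp_polyA !comp_polyD addrACA.
Qed.

Lemma act_X_0 (u v : pair2 F) : addp (act 'X u) (act 0 v) = u.
Proof. by case: u => u1 u2; rewrite /addp /act /= !comp_polyX !comp_poly0 !addr0. Qed.

Lemma act_0_X (u v : pair2 F) : addp (act 0 u) (act 'X v) = v.
Proof. by case: v => v1 v2; rewrite /addp /act /= !comp_polyX !comp_poly0 !add0r. Qed.

Lemma basis_mem S (u v : pair2 F) : is_basis2 q S u v -> S u /\ S v.
Proof.
case=> S_span _; split; apply/S_span.
  by exists 'X, 0; rewrite act_X_0; split; [exact: linX | split; [exact: lin0 |]].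
by exists 0, 'X; rewrite act_0_X; split; [exact: lin0 | split; [exact: linX |]].
Qed.

Lemma basis_ext S S' (u v : pair2 F) : is_basis2 q S u v ->
  (forall w, S w <-> S' w) -> is_basis2 q S' u v.
Proof. by case=> S_span uv_free SS'; split=> // w; rewrite -SS'. Qed.

Lemma addp_act_swap a b (u v : pair2 F) :
  addp (act a u) (act b v) = addp (act b v) (act a u).
Proof. by rewrite /addp; congr (_, _); rewrite addrC. Qed.

Lemma basis_swap S (u v : pair2 F) : is_basis2 q S u v -> is_basis2 q S v u.
Proof.
case=> S_span uv_free; split=> [w|a b Ha Hb]; last first.
  by rewrite addp_act_swap => /(uv_free _ _ Hb Ha) [-> ->].
rewrite S_span; split=> -[a [b [Ha [Hb ->]]]]; exists b, a; by rewrite addp_act_swap.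
Qed.

Lemma basis_opp S (u v : pair2 F) : is_basis2 q S u v -> is_basis2 q S u (act (- 'X) v).
Proof.
have HN : lin (- 'X) by exact/linN/linX.
have NN : (- 'X) \Po (- 'X) = 'X :> {poly F} by rewrite comp_polyNX opprK.
have act_N b (w : pair2 F) : act b (act (- 'X) w) = act (b \Po - 'X) w.
  by rewrite /act /= !comp_polyA.
case=> S_span uv_free; split=> [w|a b Ha Hb]; last first.
  rewrite act_N => /(uv_free _ _ Ha (lin_comp Hb HN)) [-> b0].
  by split=> //; rewrite -[b]comp_polyXr -NN comp_polyA b0 comp_poly0.
rewrite S_span; split=> -[a [b [Ha [Hb ->]]]]; exists a, (b \Po - 'X).
  by rewrite act_N -comp_polyA NN comp_polyXr; do 2!split=> //; exact: lin_comp.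
by rewrite act_N; do 2!split=> //; exact: lin_comp.
Qed.

Lemma row_compC A B (u v : pair2 F) : row_comp A B u v = row_comp B A v u.
Proof. exact: addp_act_swap. Qed.

Lemma act_opp_row_comp (c d : F) (u v : pair2 F) :
  act (- 'X) (row_comp (c *: 'X) (- (d *: 'X)) v u) = row_comp (d *: 'X) (- (c *: 'X)) u v.
Proof.
rewrite /row_comp /addp /act /=; congr (_, _);
  by rewrite comp_polyNX !comp_polyNZX !comp_polyZX !scaleNr opprD opprK addrC.
Qed.

Section BasisUpdate.
Variables (g r : nat -> F) (j : nat) (u v : pair2 F).
Hypothesis uv_basis : is_basis2 q (interp_ker g r j) u v.
Let G := defect g r j u.
Let D := defect g r j v.
Hypothesis G_neq0 : G != 0.
Let u' := row_comp (Fq_ann G) 0 u v.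
Let v' := row_comp (D *: 'X) (- (G *: 'X)) u v.

Lemma basis_update_mem : interp_ker g r j.+1 u' /\ interp_ker g r j.+1 v'.
Proof.
have [ker_u ker_v] := basis_mem uv_basis; split; apply: interp_kerS => //.
- exact: lin_Fq_ann.
- exact: lin0.
- by rewrite (rootP (root_Fq_ann G)) horner0 addr0.
- exact: linZX.
- exact/linN/linZX.
- by rewrite hornerN !hornerZ !hornerX /G /D mulrC subrr.
Qed.

Lemma basis_update_span w : interp_ker g r j.+1 w ->
  exists a b, lin a /\ lin b /\ w = addp (act a u') (act b v').
Proof.
move=> ker_w; have [a [b [Ha [Hb ew]]]] := (proj1 (proj1 uv_basis w)) (interp_kerW ker_w).
have ab0 : a.[G] + b.[D] = 0.
  by case: ker_w => _ _ /(_ j (ltnSn j)); rewrite ew defect_comb.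
(* a - b o (c x) vanishes at G, so Fq_ann G divides it symbolically. *)
pose c := - (G^-1 * D).
have [a' Ha' ea] : exists2 a', lin a' & a - (b \Po (c *: 'X)) = a' \Po Fq_ann G.
  apply: Fq_ann_dvd => //; first by apply: linB => //; apply: lin_comp => //; exact: linZX.
  rewrite hornerD hornerN horner_comp hornerZ hornerX /c mulNr mulrAC mulVf // mul1r.
  by rewrite horner_linN // opprK.
have Hb' : lin (b \Po (- G^-1) *: 'X) by apply: lin_comp => //; exact: linZX.
exists a', (b \Po (- G^-1) *: 'X); do 2!split=> //.
rewrite ew act_row_comp //; congr row_comp.
  by rewrite -comp_polyA comp_polyZX scalerA mulNr -ea subrK.
rewrite comp_lin0 // add0r -comp_polyA comp_polyZX scalerN scalerA mulNr mulVf //.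
by rewrite scaleN1r opprK comp_polyXr.
Qed.

Lemma basis_update_free a b : lin a -> lin b ->
  addp (act a u') (act b v') = (0, 0) -> a = 0 /\ b = 0.
Proof.
move=> Ha Hb; rewrite act_row_comp // => e0.
have HA : lin ((a \Po Fq_ann G) + (b \Po D *: 'X)).
  by apply: linD; apply: lin_comp => //; [exact: lin_Fq_ann | exact: linZX].
have HB : lin ((a \Po 0) + (b \Po - (G *: 'X))).
  by apply: linD; apply: lin_comp => //; [exact: lin0 | exact/linN/linZX].
have [] := proj2 uv_basis _ _ HA HB e0; rewrite comp_lin0 // add0r => a0 /eqP b0.
have sGX : size (- (G *: 'X)) = 2 by rewrite size_polyN size_scale // size_polyX.
have {}b0 : b = 0 by apply/eqP; rewrite -(comp_poly2_eq0 _ sGX).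
split=> //; apply/eqP; rewrite -(comp_poly_eq0 _ (_ : 1 < size (Fq_ann G))%N).
  by rewrite -a0 b0 comp_poly0 addr0.
by rewrite size_Fq_ann ltnS ltnW.
Qed.

Lemma basis_update : is_basis2 q (interp_ker g r j.+1) u' v'.
Proof.
have [ker_u' ker_v'] := basis_update_mem.
split=> [w|]; last exact: basis_update_free.
split=> [/basis_update_span //|[a [b [Ha [Hb ->]]]]].
exact: interp_ker_comb.
Qed.

End BasisUpdate.
End Linearized.

Theorem lemma26 (F : finFieldType) (q m n : nat) (g r : nat -> F)
  (P K N D : {poly F}) (i : nat) :
  (exists p k : nat, prime p /\ (0 < k)%N /\ q = (p ^ k)%N) ->
  (1 <= m)%N ->
  #|F| = (q ^ m)%N ->
  (* g_1, ..., g_n linearly independent over F_q = {c | c^q = c} *)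
  (forall c : nat -> F, (forall l, (l < n)%N -> c l ^+ q = c l) ->
     \sum_(l < n) c l * g l = 0 -> forall l, (l < n)%N -> c l = 0) ->
  (1 <= i <= n)%N ->
  linearized q P -> linearized q K -> linearized q N -> linearized q D ->
  is_basis2 q (interp_module q i.-1 g r) (P, - K) (N, - D) ->
  let Gamma := P.[g i.-1] - K.[r i.-1] in
  let Delta := N.[g i.-1] - D.[r i.-1] in
  (Gamma != 0 ->
     is_basis2 q (interp_module q i g r)
       (row_comp ('X ^+ q - (Gamma ^+ (q - 1)) *: 'X) 0 (P, - K) (N, - D))
       (row_comp (Delta *: 'X) (- (Gamma *: 'X)) (P, - K) (N, - D))) /\
  (Delta != 0 ->
     is_basis2 q (interp_module q i g r)
       (row_comp (Delta *: 'X) (- (Gamma *: 'X)) (P, - K) (N, - D))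
       (row_comp 0 ('X ^+ q - (Delta ^+ (q - 1)) *: 'X) (P, - K) (N, - D))).
Proof.
(* The linearity of P, K, N, D is implied by the basis hypothesis. *)
move=> [p [k [p_prime [k_gt0 q_def]]]] _ cardF g_free /andP[i_gt0 i_le_n] _ _ _ _ basis.
have q_pchar : [pchar F].-nat q.
  rewrite q_def pnatX (pnatE _ p_prime).
  by rewrite (card_finPcharP (n := k * m)) // cardF q_def expnM.
have q_gt1 : (1 < q)%N by rewrite q_def -{1}(expn0 p) ltn_exp2l ?prime_gt1.
have moduleE j w : (j <= n)%N -> interp_ker q g r j w <-> interp_module q j g r w.
  move=> jn; split; first exact: (interp_ker_module q_pchar q_gt1 cardF g_free jn).
  exact: (interp_module_ker q_pchar q_gt1 cardF g_free jn).
case: i i_gt0 i_le_n basis => // i _ i_lt_n basis Gamma Delta /=.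
have {}basis : is_basis2 q (interp_ker q g r i) (P, - K) (N, - D).
  by apply: basis_ext basis _ => w; rewrite moduleE // ltnW.
have GammaE : Gamma = defect g r i (P, - K) by rewrite /defect /= hornerN.
have DeltaE : Delta = defect g r i (N, - D) by rewrite /defect /= hornerN.
split=> [Gamma_neq0|Delta_neq0]; apply: basis_ext (fun w => moduleE _ w i_lt_n).
  by rewrite GammaE DeltaE; apply: basis_update; rewrite -?GammaE.
(* Delta <> 0: update the swapped basis, then swap back and negate one row. *)
apply: basis_swap; rewrite row_compC GammaE DeltaE -act_opp_row_comp.
apply: (basis_opp q_pchar q_gt1); apply: (basis_update q_pchar q_gt1 (basis_swap basis)).
by rewrite -DeltaE.
Qed.
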